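(* In the setting of the context, assume (G1), (G2), (G3). Let $M:=(2c_D^2c^2c_1^2)\vee(3cc_2)$, let $k\in\mathbb N$ be such that $M\le M_0^k$ and $\alpha_0^k<1/4$, put $\alpha_M:=\alpha_0^k$, and let $0<\alpha\le\alpha_M$. Let $\eta:=(2c_Dc^3c_1^2c_2)^{-1}$. Then for every $x_0\in X_0$ and $0<r<R_0(x_0)$, every $x\in U(x_0,\alpha r)$ and every closed set $A\subseteq U(x_0,\alpha r)$, $$\varepsilon_x^{A\cup (X\setminus U(x_0,r))}(A)\ \ge\ \eta\,\frac{\operatorname{cap}A}{\operatorname{cap}U(x_0,\alpha r)}.$$
   Context: $(X,\rho)$ is a separable metric space, $X_0\subseteq X$ open; $\mathcal M(X)$ the finite Borel measures (extended to universally measurable sets), $\|\mu\|:=\mu(X)$, $\varepsilon_x$ the Dirac measure. For every open $U\subseteq X$ and $x\in X$ a measure $\mu_x^U\in\mathcal M(X)$ is given such that for all open $U,V$ and all $x$: $\mu_x^U(U)=0$, $\|\mu_x^U\|\le1$, $\mu_x^U=\varepsilon_x$ if $x\notin U$; $y\mapsto\mu_y^U(E)$ is universally measurable for Borel $E$; $\mu_x^U=\int\mu_y^U\,d\mu_x^V(y)$ if $V\subseteq U$. For closed $A$, $\varepsilon_x^A:=\mu_x^{X\setminus A}$. $\mathcal U(X_0)$: open $U$ with $\overline U\subseteq X_0$; $U(x,r)$ open ball; $R_0(x):=\sup\{r>0:\overline{U(x,r)}\subseteq X_0\}$. $G\colon X\times X\to(0,\infty]$ Borel, $G\mu(x):=\int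 G(x,y)d\mu(y)$, $\operatorname{cap}A:=\sup\{\|\mu\|:\mu\in\mathcal M(X),\ \mu(X\setminus A)=0,\ G\mu\le1\}$. (G1): there is $c_1\ge1$ such that for all $U\in\mathcal U(X_0)$, $x\in U$, $\delta>0$, closed $A\subseteq U$ there are a closed neighborhood $B\subseteq U$ of $A$ and a measure $\nu$ carried by $B$ with $\|\varepsilon_x^B\|-\delta<c_1\|\varepsilon_x^A\|$ and $\|\varepsilon_y^A\|\le G\nu(y)\le c_1\|\varepsilon_y^B\|$ for all $y$. (G2): there are a strictly decreasing continuous $g\colon[0,\infty)\to(0,\infty]$ and $c,c_D,M_0\in[1,\infty)$, $\alpha_0\in(0,1)$ with $g(r/2)\le c_Dg(r)$, $M_0g(r)\le g(\alpha_0r)$ for all $r>0$ and $c^{-1}g\circ\rho\le G\le c\,g\circ\rho$. (G3): there is $c_2\ge1$ with $\operatorname{cap}U(x,r)\ge c_2^{-1}g(r)^{-1}$ for all $x\in X_0$, $0<r<R_0(x)$. *)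

From HB Require Import structures.
From mathcomp Require Import all_boot all_order all_algebra.
From mathcomp Require Import all_classical all_reals all_analysis measurable_realfun.
Set Implicit Arguments. Unset Strict Implicit. Unset Printing Implicit Defensive.
Import Order.TTheory GRing.Theory Num.Theory.
Local Open Scope classical_set_scope.
Local Open Scope ring_scope.

Definition is_metric (R : realType) (X : Type) (rho : X -> X -> R) : Prop :=
  [/\ (forall x y, 0 <= rho x y), (forall x y, rho x y = 0 <-> x = y),
      (forall x y, rho x y = rho y x) &
      (forall x y z, rho x z <= rho x y + rho y z)].

Definition mball (R : realType) (X : Type) (rho : X -> X -> R) (x : X) (r : R)
  : set X := [set y | rho x y < r].

Definition mopen (R : realType) (X : Type) (rho : X -> X -> R) (U : set X) : Prop :=
  forall x, U x -> exists2 r : R, 0 < r & mball rho x r `<=` U.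

Definition mclosed (R : realType) (X : Type) (rho : X -> X -> R) (A : set X) : Prop :=
  mopen rho (~` A).

Definition mclosure (R : realType) (X : Type) (rho : X -> X -> R) (A : set X) : set X :=
  [set x | forall e : R, 0 < e -> exists2 y, A y & rho x y < e].

Definition minterior (R : realType) (X : Type) (rho : X -> X -> R) (A : set X) : set X :=
  [set x | exists2 r : R, 0 < r & mball rho x r `<=` A].

Definition mseparable (R : realType) (X : Type) (rho : X -> X -> R) : Prop :=
  exists D : set X, countable D /\
    forall x (e : R), 0 < e -> exists2 d, D d & rho x d < e.

Definition calU (R : realType) (X : Type) (rho : X -> X -> R) (X0 U : set X) : Prop :=
  mopen rho U /\ mclosure rho U `<=` X0.

Definition R0 (R : realType) (X : Type) (rho : X -> X -> R) (X0 : set X) (x : X)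
  : \bar R :=
  ereal_sup [set r%:E | r in [set r : R | 0 < r /\ mclosure rho (mball rho x r) `<=` X0]].

Notation Borel rho := (g_sigma_algebraType (mopen rho)).

(** universally measurable sets: measurable for the completion of every
    finite Borel measure *)
Definition umeasurable (R : realType) (X : pointedType) (rho : X -> X -> R)
  (A : set X) : Prop :=
  forall mu : {finite_measure set (Borel rho) -> \bar R},
    exists B1 B2 : set (Borel rho),
      [/\ measurable B1, measurable B2, B1 `<=` A, A `<=` B2 &
          mu (B2 `\` B1) = 0%E].

Definition umeasurable_fun (R : realType) (X : pointedType) (rho : X -> X -> R)
  (f : X -> \bar R) : Prop :=
  forall t : R, umeasurable rho [set y | (f y < t%:E)%E].

(** The integral condition is stated with respect to
    the completion of mu_x^V: it holds for every Borel version f of the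
    universally measurable function y |-> mu_y^U(E). *)
Definition balayage_family (R : realType) (X : pointedType) (rho : X -> X -> R)
  (mu : set X -> X -> {finite_measure set (Borel rho) -> \bar R}) : Prop :=
  [/\ (forall U x, mopen rho U -> mu U x U = 0%E),
      (forall U x, mopen rho U -> (mu U x setT <= 1)%E),
      (forall U x, mopen rho U -> ~ U x ->
         forall E : set (Borel rho), measurable E -> mu U x E = @dirac _ (Borel rho) x R E),
      (forall U (E : set (Borel rho)), mopen rho U -> measurable E ->
         umeasurable_fun rho (fun y => mu U y E)) &
      (forall U V (x : X), mopen rho U -> mopen rho V -> V `<=` U ->
         forall E : set (Borel rho), measurable E ->
         forall f : Borel rho -> \bar R, measurable_fun [set: Borel rho] f ->
           {ae mu V x, forall y, f y = mu U y E} ->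
           mu U x E = (\int[mu V x]_y f y)%E)].

Definition eps (R : realType) (X : pointedType) (rho : X -> X -> R)
  (mu : set X -> X -> {finite_measure set (Borel rho) -> \bar R})
  (A : set X) (x : X) : {finite_measure set (Borel rho) -> \bar R} :=
  mu (~` A) x.

Definition pot (R : realType) (X : pointedType) (rho : X -> X -> R)
  (G : X -> X -> \bar R) (nu : {finite_measure set (Borel rho) -> \bar R}) (x : X)
  : \bar R := (\int[nu]_y G x y)%E.

Definition cap (R : realType) (X : pointedType) (rho : X -> X -> R)
  (G : X -> X -> \bar R) (A : set X) : \bar R :=
  ereal_sup [set nu setT | nu in
    [set nu : {finite_measure set (Borel rho) -> \bar R} |
       nu (~` A) = 0%E /\ forall x, (pot G nu x <= 1)%E]].

Definition borel_kernel (R : realType) (X : pointedType) (rho : X -> X -> R)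
  (G : X -> X -> \bar R) : Prop :=
  (forall x y, (0 < G x y)%E) /\
  measurable_fun setT (fun p : (Borel rho * Borel rho)%type => G p.1 p.2).

Definition G1 (R : realType) (X : pointedType) (rho : X -> X -> R)
  (mu : set X -> X -> {finite_measure set (Borel rho) -> \bar R})
  (G : X -> X -> \bar R) (X0 : set X) (c1 : R) : Prop :=
  1 <= c1 /\
  forall (U : set X) (x : X) (delta : R) (A : set X),
    calU rho X0 U -> U x -> 0 < delta -> mclosed rho A -> A `<=` U ->
    exists (B : set X) (nu : {finite_measure set (Borel rho) -> \bar R}),
      [/\ [/\ mclosed rho B, A `<=` minterior rho B & B `<=` U], nu (~` B) = 0%E,
          (eps mu B x setT - delta%:E < c1%:E * eps mu A x setT)%E &
          forall y, (eps mu A y setT <= pot G nu y)%E /\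
                    (pot G nu y <= c1%:E * eps mu B y setT)%E].

Definition G2 (R : realType) (X : pointedType) (rho : X -> X -> R)
  (G : X -> X -> \bar R) (g : R -> \bar R) (c cD M0 alpha0 : R) : Prop :=
  [/\ [/\ (forall s t : R, 0 <= s -> s < t -> (g t < g s)%E),
          {within `[0, +oo[, continuous g} &
          (forall t : R, 0 <= t -> (0 < g t)%E)],
      [/\ 1 <= c, 1 <= cD, 1 <= M0, 0 < alpha0 & alpha0 < 1],
      (forall r : R, 0 < r -> (g (r / 2)%R <= cD%:E * g r)%E),
      (forall r : R, 0 < r -> (M0%:E * g r <= g (alpha0 * r)%R)%E) &
      (forall x y, (c^-1%:E * g (rho x y) <= G x y)%E /\
                   (G x y <= c%:E * g (rho x y))%E)].

Definition G3 (R : realType) (X : pointedType) (rho : X -> X -> R)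
  (G : X -> X -> \bar R) (g : R -> \bar R) (X0 : set X) (c2 : R) : Prop :=
  1 <= c2 /\
  forall (x : X) (r : R), X0 x -> 0 < r -> (r%:E < R0 rho X0 x)%E ->
    (c2^-1%:E * (g r)^-1 <= cap rho G (mball rho x r))%E.

From HB Require Import structures.
From mathcomp Require Import all_boot all_order all_algebra.
From mathcomp Require Import all_classical all_reals all_analysis measurable_realfun.
From mathcomp Require Import ring lra.
Import Order.TTheory GRing.Theory Num.Theory.
Local Open Scope classical_set_scope.
Local Open Scope ring_scope.

(** Write W = U(x0, alpha r).  For delta > 0, (G1) gives a closed B with A in B in W
    and a measure nu on B with ||eps_y^A|| <= G nu (y) <= c1 ||eps_y^B||.  Since nu
    lives in W, (G2) makes G nu at least c^-1 g(2 alpha r) ||nu|| at x and at most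
    c g(r/2) ||nu|| off U(x0, r).  Sweeping eps_x^A through eps_x^(A u X\U(x0,r))
    bounds ||eps_x^A|| by the hitting probability of A plus c g(r/2) ||nu||, and the
    choice of k gives 2 c^2 c1^2 g(r/2) <= g(2 alpha r), so this term is absorbed.
    Finally cap A <= c^2 ||nu|| because G nu >= 1 on A, and (G3) with doubling gives
    cap W >= (c2 cD g(2 alpha r))^-1. *)

Set Implicit Arguments.
Unset Strict Implicit.
Unset Printing Implicit Defensive.

Section metric.
Variables (R : realType) (X : pointedType) (rho : X -> X -> R).

Lemma mball_open x r : is_metric rho -> mopen rho (mball rho x r).
Proof.
case=> _ _ _ ht y /= hy; exists (r - rho x y); first by rewrite subr_gt0.
by move=> z /= hz; apply: le_lt_trans (ht x y z) _; rewrite -ltrBrDl.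
Qed.

Lemma mopenI U V : mopen rho U -> mopen rho V -> mopen rho (U `&` V).
Proof.
move=> oU oV y [Uy Vy].
have [e1 e10 h1] := oU y Uy; have [e2 e20 h2] := oV y Vy.
exists (Num.min e1 e2); first by rewrite lt_min e10 e20.
by move=> z; rewrite /mball /= lt_min => /andP[/h1 ? /h2].
Qed.

Lemma le_mball x r s : r <= s -> mball rho x r `<=` mball rho x s.
Proof. by move=> rs y /= /lt_le_trans; apply. Qed.

Lemma mclosureS A B : A `<=` B -> mclosure rho A `<=` mclosure rho B.
Proof.
by move=> AB y /= h e e0; have [z Az hz] := h e e0; exists z => //; exact: AB.
Qed.

Lemma calU_mball X0 x r :
  is_metric rho -> (r%:E < R0 rho X0 x)%E -> calU rho X0 (mball rho x r).
Proof.
move=> hm /ereal_sup_gt[_ [s [s0 hs] <-]]; rewrite lte_fin => rs.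
split; first exact: mball_open.
by apply: subset_trans hs; apply/mclosureS/le_mball/ltW.
Qed.

Lemma mopen_measurable (U : set X) :
  mopen rho U -> measurable (U : set (Borel rho)).
Proof. exact: sub_sigma_algebra. Qed.

Lemma mclosed_measurable (A : set X) :
  mclosed rho A -> measurable (A : set (Borel rho)).
Proof. by move=> cA; rewrite -(setCK A); apply: measurableC; exact: mopen_measurable. Qed.

End metric.

Section measurable_version.
Context d (T : measurableType d) (R : realType).
Variables (P : {measure set T -> \bar R}) (h : T -> \bar R) (B1 B2 : rat -> set T).
Hypotheses (mB1 : forall q, measurable (B1 q)) (mB2 : forall q, measurable (B2 q)).
Hypothesis B1_sub : forall q, B1 q `<=` [set y | (h y < (ratr q)%:E)%E].
Hypothesis sub_B2 : forall q, [set y | (h y < (ratr q)%:E)%E] `<=` B2 q.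
Hypothesis B21_null : forall q, P (B2 q `\` B1 q) = 0%E.
Hypothesis h_fin : forall y, h y \is a fin_num.

Let rat_of n : rat := odflt 0 (unpickle n).

Let rat_ofK q : rat_of (pickle q) = q.
Proof. by rewrite /rat_of pickleK. Qed.

Let step n y : \bar R := if y \in B1 (rat_of n) then (ratr (rat_of n))%:E else +oo%E.

(* The infimum of the rationals q with y in B1 q; it agrees with h off the
   null set where some B1 q and B2 q differ. *)
Let version y : \bar R := einfs (fun n => step n y) 0.

Let measurable_version : measurable_fun setT version.
Proof.
apply: (measurable_fun_einfs _ 0) => n; apply: measurable_fun_ifT => //.
apply: (measurable_fun_bool true); rewrite setTI.
rewrite (_ : _ @^-1` _ = B1 (rat_of n)) //.
by apply/seteqP; split=> y /=; [move/set_mem | move/mem_set].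
Qed.

Let lt_step n y : (h y < step n y)%E.
Proof.
rewrite /step; case: ifPn => [/set_mem/B1_sub//|_].
by rewrite ltey_eq h_fin.
Qed.

Let le_version y : (h y <= version y)%E.
Proof. by apply: le_ereal_inf_tmp => _ [n _ <-]; exact/ltW/lt_step. Qed.

Let version_ae : {ae P, forall y, version y = h y}.
Proof.
pose N := \bigcup_n (B2 (rat_of n) `\` B1 (rat_of n)).
have mN : measurable N by apply: bigcupT_measurable => n; exact: measurableD.
exists N; split => //.
  apply: measure_negligible => //; apply: negligible_bigcup => n.
  by exists (B2 (rat_of n) `\` B1 (rat_of n)); split => //; exact: measurableD.
move=> y /= hy; apply: contra_notP hy => Ny.
have B1y q : (h y < (ratr q)%:E)%E -> y \in B1 q.
  move=> /sub_B2 B2y; apply/mem_set; apply: contra_notP Ny => B1y.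
  by exists (pickle q) => //; rewrite rat_ofK.
apply/eqP; rewrite eq_le le_version andbT.
apply/lee_addgt0Pr => e e0; rewrite -(fineK (h_fin y)).
have /rat_in_itvoo[q] : fine (h y) < fine (h y) + e by rewrite ltrDl.
rewrite in_itv /= => /andP[hq qe].
apply: (@le_trans _ _ (step (pickle q) y)).
  by apply: ereal_inf_lbound; exists (pickle q).
rewrite /step rat_ofK ifT ?lee_fin ?ltW //.
by apply: B1y; rewrite -(fineK (h_fin y)) lte_fin.
Qed.

Lemma exists_measurable_version : exists f : T -> \bar R,
  [/\ measurable_fun setT f, (forall y, h y <= f y)%E & {ae P, forall y, f y = h y}].
Proof. by exists version. Qed.

End measurable_version.

Lemma umeasurable_fun_version (R : realType) (X : pointedType) (rho : X -> X -> R)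
    (P : {finite_measure set (Borel rho) -> \bar R}) (h : X -> \bar R) :
  umeasurable_fun rho h -> (forall y, h y \is a fin_num) ->
  exists f : Borel rho -> \bar R,
    [/\ measurable_fun setT f, (forall y, h y <= f y)%E & {ae P, forall y, f y = h y}].
Proof.
move=> hm hfin.
have /choice[B hB] q : exists B : set (Borel rho) * set (Borel rho),
    [/\ measurable B.1, measurable B.2, B.1 `<=` [set y | (h y < (ratr q)%:E)%E],
        [set y | (h y < (ratr q)%:E)%E] `<=` B.2 & P (B.2 `\` B.1) = 0%E].
  by have [B1 [B2 [? ? ? ? ?]]] := hm (ratr q) P; exists (B1, B2).
by apply: (@exists_measurable_version _ _ _ P h (fst \o B) (snd \o B)) => // q;
  case: (hB q).
Qed.

Lemma finite_measure_EFin d (T : measurableType d) (R : realType)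
    (m : {finite_measure set T -> \bar R}) (E : set T) :
  measurable E -> exists v : R, m E = v%:E.
Proof. by move=> mE; exists (fine (m E)); rewrite fineK // fin_num_measure. Qed.

Lemma ae_carrier d (T : measurableType d) (R : realType) (nu : {measure set T -> \bar R})
    (B : set T) (Q : T -> Prop) :
  measurable B -> nu (~` B) = 0%E -> (forall z, B z -> Q z) -> {ae nu, forall z, Q z}.
Proof.
move=> mB nB hQ; exists (~` B); split => //; first exact: measurableC.
by move=> z /= nQz Bz; exact/nQz/hQ.
Qed.

Section potential.
Variables (R : realType) (X : pointedType) (rho : X -> X -> R) (G : X -> X -> \bar R).
Hypothesis hG : borel_kernel rho G.
Local Open Scope ereal_scope.

Let G_ge0 y z : 0 <= G y z.
Proof. by case: hG => G_gt0 _; exact/ltW. Qed.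

Lemma measurable_kernel2 y : measurable_fun [set: Borel rho] (G y).
Proof. by case: hG => _ mG; exact: (measurable_fun_pair2 (y : Borel rho) mG). Qed.

Lemma measurable_pot (nu : {finite_measure set (Borel rho) -> \bar R}) :
  measurable_fun [set: Borel rho] (pot G nu).
Proof.
case: hG => _ mG.
exact: (@measurable_fun_fubini_tonelli_F _ _ _ _ _ nu _ mG (fun p => G_ge0 p.1 p.2)).
Qed.

Lemma pot_le_mass (nu : {finite_measure set (Borel rho) -> \bar R}) (B : set X) y (K : R) :
  measurable (B : set (Borel rho)) -> nu (~` B) = 0 -> (0 <= K)%R ->
  (forall z, B z -> G y z <= K%:E) -> pot G nu y <= K%:E * nu setT.
Proof.
move=> mB nB K0 hK; rewrite /pot -integral_cst //.
apply: ae_ge0_le_integral => //; first exact: measurable_kernel2.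
by apply: ae_carrier mB nB _ => z /hK.
Qed.

Lemma pot_ge_mass (nu : {finite_measure set (Borel rho) -> \bar R}) (B : set X) y (K : R) :
  measurable (B : set (Borel rho)) -> nu (~` B) = 0 -> (0 <= K)%R ->
  (forall z, B z -> K%:E <= G y z) -> K%:E * nu setT <= pot G nu y.
Proof.
move=> mB nB K0 hK; rewrite /pot -integral_cst //.
apply: ae_ge0_le_integral => //; first exact: measurable_kernel2.
by apply: ae_carrier mB nB _ => z /hK.
Qed.

Lemma integral_pot_le_mass (m nu : {finite_measure set (Borel rho) -> \bar R}) (K : R) :
  (0 <= K)%R -> (forall y z, G y z <= K%:E * G z y) -> (forall y, pot G m y <= 1) ->
  \int[m]_y pot G nu y <= K%:E * nu setT.
Proof.
move=> K0 hsym hm; case: hG => _ mG.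
have G2_ge0 p : 0 <= G p.1 p.2 by [].
have -> : \int[m]_y pot G nu y = \int[m \x nu]_p G p.1 p.2.
  by rewrite (fubini_tonelli1 _ mG G2_ge0).
rewrite (fubini_tonelli2 _ mG G2_ge0) -integral_cst //.
apply: ge0_le_integral => //.
- by move=> z _; apply: integral_ge0.
- exact: (@measurable_fun_fubini_tonelli_G _ _ _ _ _ m _ mG G2_ge0).
- move=> z _; rewrite /fubini_G /=.
  apply: (@le_trans _ _ (\int[m]_y (K%:E * G z y))).
    apply: ge0_le_integral => //; first exact: (measurable_fun_pair1 (z : Borel rho) mG).
    by apply: measurable_funeM; exact: measurable_kernel2.
  rewrite ge0_integralZl //; last exact: measurable_kernel2.
  by rewrite -[leRHS]mule1 lee_wpmul2l ?lee_fin //; exact: hm.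
Qed.

Lemma cap_le_mass (nu : {finite_measure set (Borel rho) -> \bar R}) (A : set X) (K : R) :
  measurable (A : set (Borel rho)) -> (0 <= K)%R ->
  (forall y z, G y z <= K%:E * G z y) -> (forall y, A y -> 1 <= pot G nu y) ->
  cap rho G A <= K%:E * nu setT.
Proof.
move=> mA K0 hsym hA; apply: ge_ereal_sup => _ [m [mA0 hm] <-].
apply: le_trans (integral_pot_le_mass nu K0 hsym hm); rewrite -[leLHS]mul1e.
rewrite -integral_cst //; apply: ae_ge0_le_integral => //.
- by move=> y _; apply: integral_ge0.
- exact: measurable_pot.
- by apply: ae_carrier mA mA0 _ => y /hA.
Qed.

Lemma cap_ge0 (A : set X) : 0 <= cap rho G A.
Proof.
apply: ereal_sup_ubound; exists mzero => //; split => // y.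
by rewrite /pot integral_measure_zero.
Qed.

End potential.

Section comparison_function.
Variables (R : realType) (X : pointedType) (rho : X -> X -> R) (G : X -> X -> \bar R).
Variables (g : R -> \bar R) (c cD M0 alpha0 : R).
Hypothesis hG2 : G2 rho G g c cD M0 alpha0.

Lemma g_le s t : 0 <= s -> s <= t -> (g t <= g s)%E.
Proof.
case: hG2 => [[g_dec _ _] _ _ _ _] s0; rewrite le_eqVlt => /predU1P[->//|st].
exact/ltW/g_dec.
Qed.

Lemma g_fineK t : 0 < t -> g t = (fine (g t))%:E.
Proof.
case: hG2 => [[g_dec _ g_gt0] _ _ _ _] t0; rewrite fineK // ge0_fin_numE.
  exact: lt_le_trans (g_dec 0 t (lexx _) t0) (leey _).
exact/ltW/g_gt0/ltW.
Qed.

Lemma fine_g_gt0 t : 0 < t -> 0 < fine (g t).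
Proof. by case: hG2 => [[_ _ g_gt0] _ _ _ _] t0; rewrite -lte_fin -g_fineK ?g_gt0 ?ltW. Qed.

Lemma fine_g_le s t : 0 < s -> s <= t -> fine (g t) <= fine (g s).
Proof.
move=> s0 st; rewrite -lee_fin -!g_fineK //; last exact: lt_le_trans st.
exact/g_le/st/ltW.
Qed.

Lemma fine_g_half t : 0 < t -> fine (g (t / 2)) <= cD * fine (g t).
Proof.
case: hG2 => [_ _ g_half _ _] t0.
by rewrite -lee_fin EFinM -!g_fineK ?divr_gt0 //; exact: g_half.
Qed.

Lemma fine_g_iter n s : 0 < s -> M0 ^+ n * fine (g s) <= fine (g (alpha0 ^+ n * s)).
Proof.
case: hG2 => [_ [_ _ M0_ge1 alpha0_gt0 _] _ g_M0 _] s0.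
elim: n => [|n IH]; first by rewrite !expr0 !mul1r.
have ans0 : 0 < alpha0 ^+ n * s by rewrite mulr_gt0 // exprn_gt0.
rewrite exprS -mulrA (le_trans (ler_wpM2l _ IH)) ?(le_trans ler01) //.
rewrite exprS -mulrA -lee_fin EFinM -!g_fineK ?mulr_gt0 ?exprn_gt0 //.
exact: g_M0.
Qed.

(* Two doublings from r/2 to 2r cost cD^2; k contractions by alpha0 gain M0^k. *)
Lemma fine_g_half_le_near (K alpha r : R) (k : nat) :
  0 <= K -> K * cD ^+ 2 <= M0 ^+ k -> 0 < alpha -> alpha <= alpha0 ^+ k -> 0 < r ->
  K * fine (g (r / 2)) <= fine (g (2 * (alpha * r))).
Proof.
move=> K0 hK a0 ak r0.
have r2 : 0 < 2 * r by rewrite mulr_gt0.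
have h1 : fine (g (r / 2)) <= cD ^+ 2 * fine (g (2 * r)).
  apply: le_trans (fine_g_half r0) _; rewrite expr2 -mulrA ler_wpM2l //.
    by case: hG2 => [_ [_ cD1 _ _ _] _ _ _]; exact: le_trans ler01 cD1.
  by have := fine_g_half r2; rewrite [2 * r]mulrC mulfK ?pnatr_eq0.
apply: (le_trans (ler_wpM2l K0 h1)); rewrite [leLHS]mulrA.
apply: (le_trans (ler_wpM2r (ltW (fine_g_gt0 r2)) hK)).
apply: (le_trans (fine_g_iter k r2)); apply: fine_g_le; first by rewrite !mulr_gt0.
by rewrite [leRHS]mulrCA ler_pM2l // ler_pM2r.
Qed.

Lemma cap_mball_ge X0 c2 x0 s : G3 rho G g X0 c2 -> X0 x0 -> 0 < s ->
  (s%:E < R0 rho X0 x0)%E ->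
  ((c2 * (cD * fine (g (2 * s))))^-1%:E <= cap rho G (mball rho x0 s))%E.
Proof.
case=> c2_ge1 G3_cap x0X0 s_gt0 sR0.
have c2_gt0 : 0 < c2 by exact: lt_le_trans ltr01 c2_ge1.
have gs_gt0 := fine_g_gt0 s_gt0.
apply: le_trans (G3_cap x0 _ x0X0 s_gt0 sR0).
rewrite (g_fineK s_gt0) inver gt_eqF // -EFinM lee_fin invfM ler_pM2l ?invr_gt0 //.
rewrite lef_pV2 ?posrE // ?mulr_gt0 ?fine_g_gt0 ?mulr_gt0 //; last first.
  by case: hG2 => [_ [_ cD1 _ _ _] _ _ _]; exact: lt_le_trans ltr01 cD1.
by have := fine_g_half (mulr_gt0 (ltr0n _ 2) s_gt0); rewrite [_ / 2]mulrC mulKf ?pnatr_eq0.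
Qed.

Hypotheses (hrho : is_metric rho) (hG : borel_kernel rho G).

Lemma kernel_quasi_sym y z : (G y z <= (c ^+ 2)%:E * G z y)%E.
Proof.
case: hrho => _ _ rho_sym _; case: hG2 => [_ [c1 _ _ _ _] _ _ G_g].
have c0 : 0 < c by exact: lt_le_trans ltr01 c1.
apply: (le_trans (G_g y z).2); rewrite rho_sym.
apply: le_trans (lee_wpmul2l _ (G_g z y).1); last by rewrite lee_fin exprn_ge0 ?ltW.
by rewrite muleA -EFinM expr2 mulrK ?unitfE ?gt_eqF.
Qed.

Lemma pot_ge_near (nu : {finite_measure set (Borel rho) -> \bar R}) (B : set X) y s :
  measurable (B : set (Borel rho)) -> nu (~` B) = 0%E -> 0 < s ->
  (forall z, B z -> rho y z <= s) -> ((c^-1 * fine (g s))%:E * nu setT <= pot G nu y)%E.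
Proof.
case: hG2 => [_ [c1 _ _ _ _] _ _ G_g] mB nB s0 hB.
have c0 : 0 < c by exact: lt_le_trans ltr01 c1.
apply: (pot_ge_mass hG mB nB); first by rewrite mulr_ge0 ?invr_ge0 ?ltW ?fine_g_gt0.
move=> z Bz; apply: le_trans (G_g y z).1; rewrite EFinM -g_fineK //.
apply: lee_wpmul2l; first by rewrite lee_fin invr_ge0 ltW.
by apply: g_le (hB z Bz); case: hrho.
Qed.

Lemma pot_le_far (nu : {finite_measure set (Borel rho) -> \bar R}) (B : set X) y s :
  measurable (B : set (Borel rho)) -> nu (~` B) = 0%E -> 0 < s ->
  (forall z, B z -> s <= rho y z) -> (pot G nu y <= (c * fine (g s))%:E * nu setT)%E.
Proof.
case: hG2 => [_ [c1 _ _ _ _] _ _ G_g] mB nB s0 hB.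
have c0 : 0 < c by exact: lt_le_trans ltr01 c1.
apply: (pot_le_mass hG mB nB); first by rewrite mulr_ge0 ?ltW ?fine_g_gt0.
move=> z Bz; apply: (le_trans (G_g y z).2); rewrite EFinM -g_fineK //.
by apply: lee_wpmul2l; [rewrite lee_fin ltW | apply: g_le (hB z Bz); exact: ltW].
Qed.

End comparison_function.

Section balayage.
Variables (R : realType) (X : pointedType) (rho : X -> X -> R).
Variable mu : set X -> X -> {finite_measure set (Borel rho) -> \bar R}.
Hypothesis hmu : balayage_family mu.
Local Open Scope ereal_scope.

Lemma eps_setT_mem (A : set X) y : mclosed rho A -> A y -> eps mu A y setT = 1.
Proof.
case: hmu => _ _ mu_out _ _ cA Ay.
by rewrite /eps mu_out // ?diracT // => /(_ Ay).
Qed.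

(* mu_x^(~A) = int mu_y^(~A) d mu_x^V with V = U \ A, and mu_x^V lives on A u ~U,
   where the integrand is 1 on A and at most S off U. *)
Lemma eps_setT_le_hit (A U : set X) x (S : R) :
  mclosed rho A -> mopen rho U -> (0 <= S)%R ->
  (forall y, ~ U y -> eps mu A y setT <= S%:E) ->
  eps mu A x setT <= eps mu (A `|` ~` U) x A + S%:E.
Proof.
case: (hmu) => mu_in mu_le1 _ mu_meas mu_sweep cA oU S0 hS.
have oV : mopen rho (~` (A `|` ~` U)) by rewrite setCU setCK; exact: mopenI.
have VA : ~` (A `|` ~` U) `<=` ~` A by apply: subsetC; exact: subsetUl.
have mA := mclosed_measurable cA.
set P := eps mu (A `|` ~` U) x.
have [f [mf hf fae]] := umeasurable_fun_version P (mu_meas _ _ cA measurableT)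
  (fun y => fin_num_measure (mu (~` A) y) setT measurableT).
have f_ge0 y : 0 <= f y by exact: le_trans (measure_ge0 _ _) (hf y).
have AUae : {ae P, forall y, (A `|` ~` U) y}.
  apply: (@ae_carrier _ _ _ P (A `|` ~` U)) => //; last exact: mu_in.
  by apply: measurableU => //; apply: measurableC; exact: mopen_measurable.
rewrite /eps (mu_sweep _ _ x cA oV VA _ measurableT f mf fae).
apply: (@le_trans _ _ (\int[P]_y ((\1_A y)%:E + S%:E))).
  apply: ae_ge0_le_integral => //.
  - by move=> y _; rewrite adde_ge0 // lee_fin.
  - apply: emeasurable_funD; last exact: measurable_cst.
    by apply/measurable_EFinP; exact: measurable_indic.
  - apply: filterS2 fae AUae => y -> [Ay|nUy] _.
      by rewrite (eps_setT_mem cA Ay) indicE mem_set //= lee_fin lerDl.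
    by apply: le_trans (hS y nUy) _; rewrite lee_fin lerDr indicE; case: (_ \in _).
rewrite ge0_integralD //; last by apply/measurable_EFinP; exact: measurable_indic.
rewrite integral_indic // setIT integral_cst // leeD2l //.
by rewrite -[leRHS]mule1 lee_wpmul2l ?lee_fin //; exact: mu_le1.
Qed.

End balayage.

Lemma hitting_estimate_arith (R : realFieldType) (c c1 gnear gfar n eB eA p d : R) :
  0 < c -> 0 < c1 -> 0 <= n -> 0 <= gfar ->
  2 * c ^+ 2 * c1 ^+ 2 * gfar <= gnear -> c^-1 * gnear * n <= c1 * eB ->
  eB - d < c1 * eA -> eA <= p + c * gfar * n ->
  gnear * (c ^+ 2 * n) <= 2 * c ^+ 3 * c1 ^+ 2 * p + 2 * c ^+ 3 * c1 * d.
Proof.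
move=> c0 c10 n0 gfar0 hg h1 h2 h3.
have e1 : gnear * n <= c * (c1 * eB).
  have -> : gnear * n = c * (c^-1 * gnear * n) by rewrite !mulrA mulfV ?gt_eqF ?mul1r.
  by rewrite ler_pM2l.
have e2 : c1 * eB <= c1 * (c1 * eA + d) by rewrite ler_pM2l //; lra.
have e3 : c1 * eA <= c1 * (p + c * gfar * n) by rewrite ler_pM2l.
have e4 : 2 * c ^+ 2 * c1 ^+ 2 * gfar * n <= gnear * n by apply: ler_wpM2r.
have e5 : gnear * n <= 2 * c * c1 ^+ 2 * p + 2 * c * c1 * d.
  have e6 := ler_wpM2l (ltW c0) (ler_wpM2l (ltW c10) e3).
  have e7 := ler_wpM2l (ltW c0) e2.
  rewrite !exprS !expr0 !mulr1 in e4 *; nra.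
have := ler_wpM2l (exprn_ge0 2 (ltW c0)) e5.
rewrite !exprS !expr0 !mulr1; nra.
Qed.

Lemma le_ratio (R : realType) (a w p : \bar R) (K M L : R) :
  0 < K -> 0 < M -> 0 < L -> (0 <= a)%E -> (K%:E * a <= M%:E * p)%E -> (L^-1%:E <= w)%E ->
  ((K / (M * L))%:E * (a / w) <= p)%E.
Proof.
move=> K0 M0 L0 a0 hKa hw.
have w0 : (0 < w)%E by apply: lt_le_trans hw; rewrite lte_fin invr_gt0.
have hKMa : ((K / M)%:E * a <= p)%E.
  have := lee_wpmul2l (_ : (0 <= (M^-1)%:E)%E) hKa.
  rewrite !muleA -!EFinM mulVf ?lt0r_neq0 // mul1e mulrC; apply.
  by rewrite lee_fin invr_ge0 ltW.
rewrite invfM mulrA; apply: le_trans hKMa.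
have -> : ((K / M)%:E * a = (K / M / L)%:E * (a * L%:E))%E.
  by rewrite [(a * _)%E]muleC muleA -EFinM divfK ?gt_eqF.
apply: lee_wpmul2l; first by rewrite lee_fin !divr_ge0 ?ltW.
apply: lee_wpmul2l => //; move: w0 hw; case: w => [w||] //= w0 hw.
  by rewrite inver gt_eqF -?lte_fin // lee_fin -(invrK L) lef_pV2 ?posrE ?invr_gt0 // -lee_fin.
by rewrite lee_fin ltW.
Qed.

Section hitting_estimate.
Variables (R : realType) (X : pointedType) (rho : X -> X -> R) (X0 : set X).
Variables (mu : set X -> X -> {finite_measure set (Borel rho) -> \bar R}).
Variables (G : X -> X -> \bar R) (g : R -> \bar R) (c cD M0 alpha0 c1 : R).
Hypotheses (hrho : is_metric rho) (hmu : balayage_family mu) (hG : borel_kernel rho G).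
Hypotheses (hG1 : G1 mu G X0 c1) (hG2 : G2 rho G g c cD M0 alpha0).
Variables (x0 : X) (r alpha : R) (x : X) (A : set X).
Hypotheses (r_gt0 : 0 < r) (alpha_gt0 : 0 < alpha) (alpha_le_half : alpha <= 2^-1).
Hypothesis W_calU : calU rho X0 (mball rho x0 (alpha * r)).
Hypotheses (xW : mball rho x0 (alpha * r) x) (cA : mclosed rho A).
Hypothesis AW : A `<=` mball rho x0 (alpha * r).
Hypothesis near_far :
  2 * c ^+ 2 * c1 ^+ 2 * fine (g (r / 2)) <= fine (g (2 * (alpha * r))).

Let c_gt0 : 0 < c.
Proof. by case: hG2 => [_ [c_ge1 _ _ _ _] _ _ _]; exact: lt_le_trans ltr01 c_ge1. Qed.

Let c1_gt0 : 0 < c1.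
Proof. by case: hG1 => c1_ge1 _; exact: lt_le_trans ltr01 c1_ge1. Qed.

Let alpha_r_le_half : alpha * r <= r / 2.
Proof. by rewrite mulrC ler_pM2l. Qed.

Let dist_near z : mball rho x0 (alpha * r) z -> rho x z <= 2 * (alpha * r).
Proof.
case: hrho => _ _ rho_sym rho_tri Wz; apply/ltW/(le_lt_trans (rho_tri x x0 z)).
by rewrite rho_sym; move: xW Wz; rewrite /mball /=; lra.
Qed.

Let dist_far y z : ~ mball rho x0 r y -> mball rho x0 (alpha * r) z -> r / 2 <= rho y z.
Proof.
case: hrho => _ _ rho_sym rho_tri; move: (rho_tri x0 z y) alpha_r_le_half.
by rewrite /mball /= (rho_sym z y) => ? ? /negP; rewrite -leNgt; lra.
Qed.

Lemma g_cap_le_hit_delta (delta : R) : 0 < delta ->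
  ((fine (g (2 * (alpha * r))))%:E * cap rho G A <=
   (2 * c ^+ 3 * c1 ^+ 2)%:E * eps mu (A `|` ~` mball rho x0 r) x A
     + (2 * c ^+ 3 * c1 * delta)%:E)%E.
Proof.
move=> delta_gt0.
have [B [nu [[cB _ BW] nuB hxB hy]]] := hG1.2 _ x delta A W_calU xW delta_gt0 cA AW.
have mB := mclosed_measurable cB.
have ar2 : 0 < 2 * (alpha * r) by rewrite !mulr_gt0.
have [n nE] := finite_measure_EFin nu measurableT.
have n_ge0 : 0 <= n by rewrite -lee_fin -nE measure_ge0.
have [p pE] :=
  finite_measure_EFin (eps mu (A `|` ~` mball rho x0 r) x) (mclosed_measurable cA).
have near : ((c^-1 * fine (g (2 * (alpha * r))) * n)%:E <= pot G nu x)%E.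
  by rewrite EFinM -nE; apply: (pot_ge_near hG2 hrho hG mB nuB ar2) => z /BW /dist_near.
have far y : ~ mball rho x0 r y -> (pot G nu y <= (c * fine (g (r / 2)) * n)%:E)%E.
  move=> nUy; rewrite EFinM -nE; apply: (pot_le_far hG2 hG mB nuB); first by rewrite divr_gt0.
  by move=> z /BW; exact: dist_far.
have hit : (eps mu A x setT <= (p + c * fine (g (r / 2)) * n)%:E)%E.
  rewrite EFinD -pE; apply: (eps_setT_le_hit hmu x cA); first exact: mball_open.
    by rewrite mulr_ge0 // mulr_ge0 // ltW ?c_gt0 ?(fine_g_gt0 hG2) ?divr_gt0.
  by move=> y /far; apply: le_trans (hy y).1.
have capA : (cap rho G A <= (c ^+ 2 * n)%:E)%E.
  rewrite EFinM -nE; apply: (cap_le_mass hG).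
  - exact: mclosed_measurable.
  - exact: exprn_ge0 (ltW c_gt0).
  - exact: (kernel_quasi_sym hG2 hrho).
  - by move=> y Ay; rewrite -(eps_setT_mem hmu cA Ay); exact: (hy y).1.
have [eB eBE] := finite_measure_EFin (eps mu B x) measurableT.
have [eA eAE] := finite_measure_EFin (eps mu A x) measurableT.
rewrite pE -EFinM -EFinD.
have g2_ge0 : 0 <= fine (g (2 * (alpha * r))) by rewrite ltW ?(fine_g_gt0 hG2).
apply: (le_trans (lee_wpmul2l _ capA)); first by rewrite lee_fin.
rewrite -EFinM lee_fin.
apply: (hitting_estimate_arith (gfar := fine (g (r / 2))) (eB := eB) (eA := eA)) => //.
- by rewrite ltW ?(fine_g_gt0 hG2) ?divr_gt0.
- by rewrite -lee_fin [leRHS]EFinM -eBE; exact: le_trans near (hy x).2.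
- by rewrite -lte_fin EFinM EFinB -eBE -eAE.
- by rewrite -lee_fin -eAE.
Qed.

Lemma g_cap_le_hit :
  ((fine (g (2 * (alpha * r))))%:E * cap rho G A <=
   (2 * c ^+ 3 * c1 ^+ 2)%:E * eps mu (A `|` ~` mball rho x0 r) x A)%E.
Proof.
apply/lee_addgt0Pr => e e_gt0.
have K_gt0 : 0 < 2 * c ^+ 3 * c1 by rewrite !mulr_gt0 ?exprn_gt0.
have := g_cap_le_hit_delta (divr_gt0 e_gt0 K_gt0).
by rewrite [_ * (e / _)]mulrC divfK ?gt_eqF.
Qed.

End hitting_estimate.

Unset Implicit Arguments.

Theorem proposition4p9 (R : realType) (X : pointedType) (rho : X -> X -> R)
  (X0 : set X)
  (mu : set X -> X -> {finite_measure set (Borel rho) -> \bar R})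
  (G : X -> X -> \bar R) (g : R -> \bar R)
  (c cD M0 alpha0 c1 c2 : R) (k : nat) (alpha : R) :
  is_metric rho -> mseparable rho -> mopen rho X0 ->
  balayage_family mu -> borel_kernel rho G ->
  G1 mu G X0 c1 -> G2 rho G g c cD M0 alpha0 -> G3 rho G g X0 c2 ->
  Num.max (2 * cD ^+ 2 * c ^+ 2 * c1 ^+ 2) (3 * c * c2) <= M0 ^+ k ->
  alpha0 ^+ k < 4^-1 ->
  0 < alpha -> alpha <= alpha0 ^+ k ->
  forall (x0 : X) (r : R), X0 x0 -> 0 < r -> (r%:E < R0 rho X0 x0)%E ->
  forall (x : X) (A : set X),
    mball rho x0 (alpha * r) x ->
    mclosed rho A -> A `<=` mball rho x0 (alpha * r) ->
    ((2 * cD * c ^+ 3 * c1 ^+ 2 * c2)^-1%:E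
       * (cap rho G A / cap rho G (mball rho x0 (alpha * r)))
     <= eps mu (A `|` ~` mball rho x0 r) x A)%E.
Proof.
move=> hrho _ _ hmu hG hG1 hG2 hG3 hMk alpha0k_lt a_gt0 a_le x0 r x0X0 r_gt0 rR0 x A xW cA AW.
have [_ [c_ge1 cD_ge1 _ _ _] _ _ _] := hG2.
have [[c1_ge1 _] [c2_ge1 _]] := (hG1, hG3).
have [c_gt0 cD_gt0 c1_gt0 c2_gt0] : [/\ 0 < c, 0 < cD, 0 < c1 & 0 < c2].
  by split; apply: lt_le_trans ltr01 _.
have a_half : alpha <= 2^-1.
  apply: ltW; apply: le_lt_trans a_le (lt_trans alpha0k_lt _).
  by rewrite ltf_pV2 ?posrE // ltr_nat.
have ar_gt0 : 0 < alpha * r by rewrite mulr_gt0.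
have arR0 : ((alpha * r)%:E < R0 rho X0 x0)%E.
  by apply: le_lt_trans rR0; rewrite lee_fin ger_pMl // (le_trans a_half) // invf_le1 ?ler1n.
have near_far : 2 * c ^+ 2 * c1 ^+ 2 * fine (g (r / 2)) <= fine (g (2 * (alpha * r))).
  apply: (fine_g_half_le_near hG2 _ _ a_gt0 a_le r_gt0).
    by rewrite !mulr_ge0 ?exprn_ge0 ?ltW.
  have -> : 2 * c ^+ 2 * c1 ^+ 2 * cD ^+ 2 = 2 * cD ^+ 2 * c ^+ 2 * c1 ^+ 2 by ring.
  by apply: le_trans hMk; rewrite le_max lexx.
have capA := g_cap_le_hit hrho hmu hG hG1 hG2 r_gt0 a_gt0 a_half
  (calU_mball hrho arR0) xW cA AW near_far.
have capW := cap_mball_ge hG2 hG3 x0X0 ar_gt0 arR0.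
have gn_gt0 : 0 < fine (g (2 * (alpha * r))) by rewrite (fine_g_gt0 hG2) ?mulr_gt0.
rewrite (_ : (2 * cD * c ^+ 3 * c1 ^+ 2 * c2)^-1 = fine (g (2 * (alpha * r)))
  / (2 * c ^+ 3 * c1 ^+ 2 * (c2 * (cD * fine (g (2 * (alpha * r))))))); last first.
  by field; rewrite !gt_eqF.
by apply: le_ratio; rewrite ?cap_ge0 ?mulr_gt0 ?exprn_gt0.
Qed.
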